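(* Let $\mathscr{P}$ be a stationary ergodic stochastic process over a finite alphabet $\Sigma$. The set $\overline{Q}^+$ of atomic accumulation causal states of $\mathscr{P}$ is closed under translation: if $\nu\in\overline{Q}^+$ and $\sigma\in\Sigma$ with $\nu(\sigma\Sigma^\omega)>0$, then $\nu_\sigma\in\overline{Q}^+$.
   Context: $\mathcal{M}_\Sigma$ denotes the set of probability measures on $\Sigma^\omega$ with the $\sigma$-field generated by the cylinders $x\Sigma^\omega$, $x\in\Sigma^\star$. For $x=\sigma_1\cdots\sigma_n$, $Pr(x)=Pr(X_1\cdots X_n=\sigma_1\cdots\sigma_n)$; for $Pr(x)>0$, $\mu_x\in\mathcal{M}_\Sigma$ is given by $\mu_x(y\Sigma^\omega)=Pr(xy)/Pr(x)$; causal states are the classes $[x]$ of sequences with $Pr(x)>0$ under $x\sim y\iff\mu_x=\mu_y$, and $\mu_{[x]}=\mu_x$. For $\nu\in\mathcal{M}_\Sigma$, $d\in\mathbb{N}^+$, $\varepsilon>0$: $B_{d,\varepsilon}(\nu)=\{\nu'\in\mathcal{M}_\Sigma:\sum_{x\in\Sigma^d}|\nu'(x\Sigma^\omega)-\nu(x\Sigma^\omega)|<\varepsilon\}$, and $p_{l,d,\varepsilon}(\nu)=\sum\{Pr(x):x\in\Sigma^l,\ Pr(x)>0,\ \mu_{[x]}\in B_{d,\varepsilon}(\nu)\}$. $\nu$ is an accumulation causal state if $p_{d,\varepsilon}(\nu):=\liminf_{l\to\infty}p_{l,d,\varepsilon}(\nu)>0$ for all $d,\varepsilon$; then $p(\nu)=\lim_{d\to\infty}\lim_{\varepsilon\to0}p_{d,\varepsilon}(\nu)$,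 and $\nu$ is atomic if $p(\nu)>0$. $\overline{Q}^+$ is the set of atomic accumulation causal states. For $\nu(\sigma\Sigma^\omega)>0$, the translation $\nu_\sigma\in\mathcal{M}_\Sigma$ is given by $\nu_\sigma(x\Sigma^\omega)=\nu(\sigma x\Sigma^\omega)/\nu(\sigma\Sigma^\omega)$. *)

From HB Require Import structures.
From mathcomp Require Import all_boot all_order all_algebra.
From mathcomp Require Import all_classical all_reals all_analysis.
Set Implicit Arguments. Unset Strict Implicit. Unset Printing Implicit Defensive.
Import Order.TTheory GRing.Theory Num.Theory.
Import numFieldNormedType.Exports.
Local Open Scope classical_set_scope.
Local Open Scope ring_scope.

(* The point s0 is only used to equip the type with a pointedType
   structure (required by the generated sigma-algebra construction). *)
Definition word (Sigma : finType) (s0 : Sigma) := nat -> Sigma.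
HB.instance Definition _ (Sigma : finType) (s0 : Sigma) :=
  Choice.on (word s0).
HB.instance Definition _ (Sigma : finType) (s0 : Sigma) :=
  isPointed.Build (word s0) (fun _ => s0).

Definition cyl (Sigma : finType) (s0 : Sigma) (x : seq Sigma) : set (word s0) :=
  [set w | forall i, (i < size x)%N -> w i = nth s0 x i].

Arguments cyl {Sigma} s0 x.

Definition cylinders (Sigma : finType) (s0 : Sigma) : set (set (word s0)) :=
  [set cyl s0 x | x in [set: seq Sigma]].

Arguments cylinders {Sigma} s0.

Definition Omega (Sigma : finType) (s0 : Sigma) :=
  g_sigma_algebraType (cylinders s0).

Arguments Omega {Sigma} s0.

Notation MS s0 R := (probability (Omega s0) R).

Definition shift (Sigma : finType) (s0 : Sigma) (w : Omega s0) : Omega s0 :=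
  fun n => w n.+1.

Definition stationary (Sigma : finType) (s0 : Sigma) (R : realType)
  (P : MS s0 R) : Prop :=
  forall A : set (Omega s0), measurable A -> P (shift (s0:=s0) @^-1` A) = P A.

Definition ergodic (Sigma : finType) (s0 : Sigma) (R : realType)
  (P : MS s0 R) : Prop :=
  forall A : set (Omega s0), measurable A -> shift (s0:=s0) @^-1` A = A ->
    P A = 0%E \/ P A = 1%E.

Definition cylm (Sigma : finType) (s0 : Sigma) (R : realType)
  (nu : MS s0 R) (x : seq Sigma) : R := fine (nu (cyl s0 x)).

(* cylinder values of mu_x : mu_x(y Sigma^omega) = Pr(xy)/Pr(x) *)
Definition mu_cyl (Sigma : finType) (s0 : Sigma) (R : realType)
  (P : MS s0 R) (x : seq Sigma) (y : seq Sigma) : R :=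
  cylm P (x ++ y) / cylm P x.

Definition inB (Sigma : finType) (s0 : Sigma) (R : realType)
  (f : seq Sigma -> R) (d : nat) (eps : R) (nu : MS s0 R) : bool :=
  \sum_(y : d.-tuple Sigma) `| f y - cylm nu y | < eps.

Definition p_ldeps (Sigma : finType) (s0 : Sigma) (R : realType)
  (P : MS s0 R) (l d : nat) (eps : R) (nu : MS s0 R) : R :=
  \sum_(x : l.-tuple Sigma | (0 < cylm P x) && inB (mu_cyl P x) d eps nu)
     cylm P x.

Definition p_deps (Sigma : finType) (s0 : Sigma) (R : realType)
  (P : MS s0 R) (d : nat) (eps : R) (nu : MS s0 R) : R :=
  limn_inf (fun l => p_ldeps P l d eps nu).

Definition accumulation_causal_state (Sigma : finType) (s0 : Sigma)
  (R : realType) (P : MS s0 R) (nu : MS s0 R) : Prop :=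
  forall (d : nat) (eps : R), (0 < d)%N -> 0 < eps -> 0 < p_deps P d eps nu.

Definition p_atom (Sigma : finType) (s0 : Sigma) (R : realType)
  (P : MS s0 R) (nu : MS s0 R) : R :=
  limn (fun d => lim ((fun eps => p_deps P d eps nu) x @[x --> 0^'+])).

Definition in_Qbar_plus (Sigma : finType) (s0 : Sigma) (R : realType)
  (P : MS s0 R) (nu : MS s0 R) : Prop :=
  accumulation_causal_state P nu /\ 0 < p_atom P nu.

From Pilot Require Import Defs.
From HB Require Import structures.
From mathcomp Require Import all_boot all_order all_algebra.
From mathcomp Require Import all_classical all_reals all_analysis.
From mathcomp Require Import ring lra.
Import Order.TTheory GRing.Theory Num.Theory.
Import numFieldNormedType.Exports.
Local Open Scope classical_set_scope.
Local Open Scope ring_scope.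

(* If the conditional measure mu_x is within eps' of nu on words of length
   d + 1, then mu_x(sigma) > nu(sigma) / 2 and the sigma-translates of mu_x
   and nu are within 4 eps' / nu(sigma) on words of length d.  As mu_{x sigma}
   is the sigma-translate of mu_x, every word x counted in p_{l,d+1,eps'}(nu)
   yields a word x sigma counted in p_{l+1,d,eps}(nu_sigma), with
   Pr(x sigma) >= nu(sigma) Pr(x) / 2.  Hence
   p_{d,eps}(nu_sigma) >= nu(sigma) p_{d+1,eps'}(nu) / 2 and, in the limit,
   p(nu_sigma) >= nu(sigma) p(nu) / 2 > 0. *)

Set Implicit Arguments.
Unset Strict Implicit.

Section tuple_bigops.
Variables (T : Type) (idx : T) (op : Monoid.com_law idx) (Sigma : finType).

Lemma big_tuple0 (F : 0.-tuple Sigma -> T) :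
  \big[op/idx]_(t : 0.-tuple Sigma) F t = F [tuple].
Proof. by rewrite (big_pred1 [tuple]) // => t; apply/esym/eqP/tuple0. Qed.

Lemma big_tupleS n (F : n.+1.-tuple Sigma -> T) :
  \big[op/idx]_(t : n.+1.-tuple Sigma) F t =
  \big[op/idx]_(s : Sigma)
    \big[op/idx]_(t : n.-tuple Sigma) F [tuple of s :: t].
Proof.
rewrite pair_big.
rewrite (reindex (fun p : Sigma * n.-tuple Sigma => [tuple of p.1 :: p.2])) //.
exists (fun t : n.+1.-tuple Sigma => (thead t, [tuple of behead t])).
  by move=> [s t] _; congr (_, _); apply: val_inj.
by move=> t _; rewrite [RHS]tuple_eta.
Qed.

Lemma big_tuple_rcons n (F : n.+1.-tuple Sigma -> T) :
  \big[op/idx]_(t : n.+1.-tuple Sigma) F t =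
  \big[op/idx]_(t : n.-tuple Sigma)
    \big[op/idx]_(s : Sigma) F [tuple of rcons t s].
Proof.
elim: n F => [|n IHn] F; rewrite big_tupleS.
  rewrite [RHS]big_tuple0; apply: eq_bigr => s _.
  by rewrite big_tuple0; congr F; apply: val_inj.
rewrite [RHS]big_tupleS; apply: eq_bigr => s _; rewrite IHn.
by apply: eq_bigr => t _; apply: eq_bigr => s' _; congr F; apply: val_inj.
Qed.

End tuple_bigops.

Section consistent.
Variables (Sigma : finType) (V : nmodType).

Definition consistent (f : seq Sigma -> V) :=
  forall x, f x = \sum_s f (rcons x s).

Lemma consistent_cat f : consistent f ->
  forall n x, f x = \sum_(t : n.-tuple Sigma) f (x ++ t).
Proof.
move=> cf; elim=> [|n IHn] x; first by rewrite big_tuple0 cats0.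
rewrite big_tuple_rcons IHn; apply: eq_bigr => t _.
by rewrite cf; apply: eq_bigr => s _; rewrite rcons_cat.
Qed.

End consistent.

Section distance.
Variables (R : realFieldType) (Sigma : finType).
Implicit Types f g : seq Sigma -> R.

(* [inB f d eps nu] unfolds to [dist d f (cylm nu) < eps]. *)
Definition dist d f g := \sum_(y : d.-tuple Sigma) `|f y - g y|.

Definition translate (s : Sigma) f : seq Sigma -> R :=
  fun z => f (s :: z) / f [:: s].

Lemma dist_ge0 d f g : 0 <= dist d f g.
Proof. exact: sumr_ge0. Qed.

Lemma dist_leS d f g :
  consistent f -> consistent g -> dist d f g <= dist d.+1 f g.
Proof.
move=> cf cg; rewrite /dist big_tuple_rcons; apply: ler_sum => t _.
by rewrite cf cg -sumrB; apply: ler_norm_sum.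
Qed.

Lemma dist_cons_le d s f g :
  dist d (f \o cons s) (g \o cons s) <= dist d.+1 f g.
Proof.
rewrite [leRHS]/dist big_tupleS (bigD1 s) //= lerDl.
by apply: sumr_ge0 => s' _; exact: sumr_ge0.
Qed.

Lemma norm_sub_le_dist_cons d s f g : consistent f -> consistent g ->
  `|f [:: s] - g [:: s]| <= dist d (f \o cons s) (g \o cons s).
Proof.
move=> cf cg; rewrite (consistent_cat cf d) (consistent_cat cg d) -sumrB.
exact: ler_norm_sum.
Qed.

Lemma dist_translate_le d s f g : consistent g -> (forall x, 0 <= g x) ->
  0 < f [:: s] -> 0 < g [:: s] ->
  dist d (translate s f) (translate s g) <=
  (dist d (f \o cons s) (g \o cons s) + `|f [:: s] - g [:: s]|) / f [:: s].
Proof.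
move=> cg g_ge0; set m := f [:: s]; set a := g [:: s] => m0 a0.
have sum_g : \sum_(z : d.-tuple Sigma) g (s :: z) = a.
  by rewrite /a [RHS](consistent_cat cg d [:: s]).
have translate_sub z : translate s f z - translate s g z =
    (f (s :: z) - g (s :: z)) / m + g (s :: z) / a * ((a - m) / m).
  by rewrite /translate -/m -/a; field; rewrite !lt0r_neq0.
apply: (@le_trans _ _ (\sum_(z : d.-tuple Sigma)
    (`|f (s :: z) - g (s :: z)| / m + g (s :: z) / a * (`|a - m| / m)))).
  apply: ler_sum => z _; rewrite translate_sub.
  apply: le_trans (ler_normD _ _) _.
  rewrite !normrM !normfV (ger0_norm (ltW m0)) (ger0_norm (ltW a0)).
  by rewrite (ger0_norm (g_ge0 _)).
rewrite big_split /= -!mulr_suml sum_g divff ?lt0r_neq0 // mul1r -mulrDl distrC.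
exact: lexx.
Qed.

Lemma dist_translate_lt d s eps f g : consistent f -> consistent g ->
  (forall x, 0 <= g x) -> 0 < g [:: s] -> eps <= g [:: s] / 2 ->
  dist d.+1 f g < eps ->
  g [:: s] / 2 < f [:: s] /\
  dist d (translate s f) (translate s g) < 4 * eps / g [:: s].
Proof.
move=> cf cg g_ge0 a0 eps_le fg_lt.
set a := g [:: s] in a0 eps_le *; set m := f [:: s].
set S := dist d (f \o cons s) (g \o cons s).
have S_lt : S < eps := le_lt_trans (dist_cons_le d s f g) fg_lt.
have ma_le : `|m - a| <= S := norm_sub_le_dist_cons d s cf cg.
have S_ge0 : 0 <= S := dist_ge0 d _ _.
(* [|m - a| <= S < eps <= a / 2] forces [m > a / 2], whence
   [(S + |m - a|) / m < 2 eps / (a / 2)]. *)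
have am : a / 2 < m by have := ler_norm (a - m); rewrite distrC; lra.
have m0 : 0 < m by lra.
split => //; apply: le_lt_trans (dist_translate_le d cg g_ge0 m0 a0) _.
rewrite -/S -/m ltr_pdivrMr //.
rewrite (_ : 4 * eps / a * m = 2 * eps * (m / (a / 2))); last first.
  by field; rewrite lt0r_neq0.
have : 1 < m / (a / 2) by rewrite ltr_pdivlMr ?mul1r // divr_gt0.
nra.
Qed.

End distance.

Lemma mnormalizeE d (T : measurableType d) (R : realType)
    (mu : {measure set T -> \bar R}) (P : probability T R) (r : R) A :
  0 < r -> mu setT = r%:E -> mnormalize mu P A = (mu A * r^-1%:E)%E.
Proof. by move=> r0 muT; rewrite /mnormalize muT eqe gt_eqF. Qed.

Section cylinders.
Variables (R : realType) (Sigma : finType) (s0 : Sigma).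
Local Notation Om := (Omega s0).
Local Notation shift := (@Defs.shift _ s0).
Implicit Types (nu : probability Om R) (x : seq Sigma).

Lemma measurable_cyl x : measurable (cyl s0 x : set Om).
Proof. by apply: sub_sigma_algebra; exists x. Qed.

Lemma cylmE nu x : nu (cyl s0 x) = (cylm nu x)%:E.
Proof. by rewrite /cylm fineK // fin_num_measure //; exact: measurable_cyl. Qed.

Lemma cylm_ge0 nu x : 0 <= cylm nu x.
Proof. by rewrite -lee_fin -cylmE measure_ge0. Qed.

Lemma cylm_nil nu : cylm nu [::] = 1.
Proof.
rewrite /cylm (_ : cyl s0 [::] = [set: Om]) ?probability_setT //.
by apply/seteqP; split.
Qed.

Lemma cyl_rcons x s (w : Om) :
  cyl s0 (rcons x s) w <-> cyl s0 x w /\ w (size x) = s.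
Proof.
split=> [xs_w|[x_w ws] i].
  split=> [i lt_ix|]; last by rewrite xs_w ?size_rcons // nth_rcons ltnn eqxx.
  by rewrite xs_w ?size_rcons 1?ltnW // nth_rcons lt_ix.
rewrite size_rcons ltnS leq_eqVlt nth_rcons => /orP[/eqP ->|lt_ix].
  by rewrite ltnn eqxx.
by rewrite lt_ix x_w.
Qed.

Lemma cylm_consistent nu : consistent (cylm nu).
Proof.
move=> x; apply: EFin_inj; rewrite -cylmE.
have -> : cyl s0 x = \bigcup_(s in [set` enum Sigma]) cyl s0 (rcons x s).
  apply/seteqP; split=> [w x_w|w [s _ /cyl_rcons[]//]].
  by exists (w (size x)); rewrite /= ?mem_enum //; apply/cyl_rcons.
rewrite measure_fin_bigcup //.
- rewrite -fsbig_seq ?enum_uniq // big_enum -sumEFin.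
  by apply: eq_bigr => s _; exact: cylmE.
- apply/trivIsetP => s s' _ _ ss'; apply/seteqP; split=> // w.
  by move=> [/cyl_rcons[_ ws] /cyl_rcons[_ ws']]; rewrite -ws -ws' eqxx in ss'.
- by move=> s _; exact: measurable_cyl.
Qed.

Lemma cyl_cons x s : cyl s0 (s :: x) = cyl s0 [:: s] `&` shift @^-1` cyl s0 x.
Proof.
apply/seteqP; split=> [w sx_w|w [s_w x_w] [|i] //= lt_ix].
  by split=> [[|//] _|i lt_ix]; [exact: (sx_w 0%N)|exact: (sx_w i.+1)].
- exact: (s_w 0%N).
- exact: x_w.
Qed.

Lemma measurable_shift : measurable_fun setT shift.
Proof.
apply: (@measurability _ _ Om Om setT _ (cylinders s0)) => //.
move=> _ [_ [x _ <-] <-]; rewrite setTI.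
have -> : shift @^-1` cyl s0 x = \bigcup_(s in [set: Sigma]) cyl s0 (s :: x).
  apply/seteqP; split=> [w x_w|w [s _]]; last by rewrite cyl_cons => -[].
  by exists (w 0%N) => //; rewrite cyl_cons; split=> // -[].
by apply: fin_bigcup_measurable => // s _; exact: measurable_cyl.
Qed.

Lemma translate_exists nu s : 0 < cylm nu [:: s] ->
  exists nus : probability Om R, cylm nus =1 translate s (cylm nu).
Proof.
move=> nu_s_gt0.
unshelve eexists (mnormalize
  (pushforward (mrestr nu (measurable_cyl [:: s])) shift) nu).
  exact: measurable_shift.
move=> x; rewrite /cylm /= (mnormalizeE _ _ nu_s_gt0).
  by rewrite /= /pushforward /mrestr setIC -cyl_cons cylmE.
by rewrite /= /pushforward /mrestr preimage_setT setTI cylmE.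
Qed.

End cylinders.

Section causal_state_weights.
Variables (R : realType) (Sigma : finType) (s0 : Sigma).
Implicit Types (P nu : probability (Omega s0) R) (t : seq Sigma).

Lemma mu_cyl_consistent P t : consistent (mu_cyl P t).
Proof.
move=> x; rewrite /mu_cyl -mulr_suml cylm_consistent.
by congr (_ / _); apply: eq_bigr => s _; rewrite rcons_cat.
Qed.

Lemma cylm_rcons P t s : cylm P t != 0 ->
  cylm P (rcons t s) = cylm P t * mu_cyl P t [:: s].
Proof. by move=> Pt; rewrite /mu_cyl cats1 mulrC divfK. Qed.

Lemma mu_cyl_rcons P t s : cylm P t != 0 ->
  mu_cyl P (rcons t s) =1 translate s (mu_cyl P t).
Proof.
by move=> Pt z; rewrite /translate /mu_cyl cats1 cat_rcons invf_div mulrA divfK.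
Qed.

Lemma sum_cylm_tuple P l : \sum_(t : l.-tuple Sigma) cylm P t = 1.
Proof. by rewrite -(cylm_nil P) (consistent_cat (cylm_consistent P) l). Qed.

Lemma p_ldeps_ge0 P l d eps nu : 0 <= p_ldeps P l d eps nu.
Proof. by apply: sumr_ge0 => t _; exact: cylm_ge0. Qed.

Lemma p_ldeps_le1 P l d eps nu : p_ldeps P l d eps nu <= 1.
Proof.
rewrite -(sum_cylm_tuple P l) [leRHS](bigID (fun t : l.-tuple Sigma =>
  (0 < cylm P t) && inB (mu_cyl P t) d eps nu)) /= lerDl.
by apply: sumr_ge0 => t _; exact: cylm_ge0.
Qed.

Lemma le_p_ldeps P l d d' eps eps' nu nu' :
  (forall t, inB (mu_cyl P t) d eps nu -> inB (mu_cyl P t) d' eps' nu') ->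
  p_ldeps P l d eps nu <= p_ldeps P l d' eps' nu'.
Proof.
move=> inB_sub; rewrite /p_ldeps [leLHS]big_mkcond [leRHS]big_mkcond /=.
apply: ler_sum => t _; case: ifPn => [/andP[Pt t_in]|_].
  by rewrite Pt inB_sub.
by case: ifP => // _; exact: cylm_ge0.
Qed.

Lemma inB_le_eps f d eps eps' nu :
  eps <= eps' -> inB f d eps nu -> inB f d eps' nu.
Proof. by move=> le_eps /lt_le_trans; apply. Qed.

Lemma inB_dS f d eps nu : consistent f -> inB f d.+1 eps nu -> inB f d eps nu.
Proof. by move=> cf; apply/le_lt_trans/dist_leS/cylm_consistent. Qed.

End causal_state_weights.

Lemma ler_limn_inf_shift (R : realType) (u v : R^nat) c k :
  bounded_fun u -> bounded_fun v -> 0 <= c ->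
  (forall n, c * v n <= u (n + k)%N) -> c * limn_inf v <= limn_inf u.
Proof.
move=> bu bv c0 le_vu.
have cvg_infs w : bounded_fun w -> cvgn (infs w).
  move=> bw; apply: nondecreasing_is_cvgn.
    exact/nondecreasing_infs/bounded_fun_has_lbound.
  exact: bounded_fun_has_ubound_infs.
have le_infs n : c * infs v n <= infs u (n + k)%N.
  apply: lb_le_inf; first by exists (u (n + k)%N); exists (n + k)%N => /=.
  move=> _ [j /= le_nkj <-].
  have le_kj : (k <= j)%N by exact: leq_trans (leq_addl n k) le_nkj.
  have le_vu_j : c * v (j - k)%N <= u j.
    by have := le_vu (j - k)%N; rewrite subnK.
  apply: le_trans le_vu_j; apply: ler_wpM2l => //; apply: ge_inf.
    exact/has_lbound_sdrop/bounded_fun_has_lbound.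
  by exists (j - k)%N => //=; rewrite leq_subRL // addnC.
have cvg_shift : cvgn (fun n => infs u (n + k)%N).
  by apply/cvg_ex; exists (limn (infs u)); rewrite cvg_shiftn; exact: cvg_infs.
have lim_shift : limn_inf u = limn (fun n => infs u (n + k)%N).
  by apply/esym/cvg_lim => //; rewrite cvg_shiftn; exact: cvg_infs.
have lim_scale : c * limn_inf v = limn (fun n => c * infs v n).
  by apply/esym/cvg_lim => //; apply: cvgM; [exact: cvg_cst|exact: cvg_infs].
rewrite lim_shift lim_scale; apply: ler_lim.
- by apply: is_cvgM; [exact: is_cvg_cst|exact: cvg_infs].
- exact: cvg_shift.
- exact: nearW.
Qed.

Section causal_state_limits.
Variables (R : realType) (Sigma : finType) (s0 : Sigma).
Implicit Types (P nu : probability (Omega s0) R).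

Lemma bounded_p_ldeps P d eps nu :
  bounded_fun (fun l => p_ldeps P l d eps nu).
Proof.
rewrite /bounded_fun /bounded_near; near=> M => l _ /=.
rewrite ger0_norm ?p_ldeps_ge0 //; apply: le_trans (p_ldeps_le1 _ _ _ _ _) _.
by near: M; exact: nbhs_pinfty_ge.
Unshelve. all: by end_near.
Qed.

Lemma p_deps_ge0 P d eps nu : 0 <= p_deps P d eps nu.
Proof.
rewrite -[0](mul0r (p_deps P d eps nu)).
apply: (ler_limn_inf_shift (k := 0%N)) => //; try exact: bounded_p_ldeps.
by move=> l; rewrite mul0r; exact: p_ldeps_ge0.
Qed.

Lemma le_p_deps P d d' eps eps' nu nu' :
  (forall t, inB (mu_cyl P t) d eps nu -> inB (mu_cyl P t) d' eps' nu') ->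
  p_deps P d eps nu <= p_deps P d' eps' nu'.
Proof.
move=> inB_sub; rewrite -[leLHS]mul1r.
apply: (ler_limn_inf_shift (k := 0%N)) => //; try exact: bounded_p_ldeps.
by move=> l; rewrite mul1r addn0; exact: le_p_ldeps.
Qed.

Definition p_d P nu d := lim (p_deps P d ^~ nu x @[x --> (0 : R)^'+]).

Lemma p_atomE P nu : p_atom P nu = limn (p_d P nu).
Proof. by []. Qed.

Lemma p_d_inf P nu d :
  p_d P nu d = inf [set p_deps P d eps nu | eps in [set eps | 0 < eps]].
Proof.
rewrite /p_d (_ : [set eps | 0 < eps] = [set` `]0, +oo[]); last first.
  by apply/seteqP; split=> eps; rewrite /= in_itv /= andbT.
apply: cvg_lim => //; apply: nondecreasing_at_right_cvgr => //.
  by move=> e e' _ _ le_ee'; apply: le_p_deps => t; exact: inB_le_eps.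
by exists 0 => _ [eps _ <-]; exact: p_deps_ge0.
Qed.

Lemma p_d_le P nu d eps : 0 < eps -> p_d P nu d <= p_deps P d eps nu.
Proof.
move=> eps_gt0; rewrite p_d_inf; apply: ge_inf; last by exists eps.
by exists 0 => _ [e _ <-]; exact: p_deps_ge0.
Qed.

Lemma p_d_ge P nu d c :
  (forall eps, 0 < eps -> c <= p_deps P d eps nu) -> c <= p_d P nu d.
Proof.
move=> le_c; rewrite p_d_inf; apply: lb_le_inf.
  by exists (p_deps P d 1 nu); exists 1 => /=.
by move=> _ [eps /= eps_gt0 <-]; exact: le_c.
Qed.

Lemma nonincreasing_p_d P nu : nonincreasing_seq (p_d P nu).
Proof.
apply/nonincreasing_seqP => d; apply: p_d_ge => eps eps_gt0.
apply: le_trans (p_d_le _ _ _ eps_gt0) _; apply: le_p_deps => t.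
exact/inB_dS/mu_cyl_consistent.
Qed.

Lemma cvgn_p_d P nu : cvgn (p_d P nu).
Proof.
apply: nonincreasing_is_cvgn; first exact: nonincreasing_p_d.
exists 0 => _ [d _ <-]; apply: p_d_ge => eps _; exact: p_deps_ge0.
Qed.

End causal_state_limits.

Section translation.
Variables (R : realType) (Sigma : finType) (s0 : Sigma).
Variables (P nu nus : probability (Omega s0) R) (s : Sigma).
Hypothesis nus_translate : cylm nus =1 translate s (cylm nu).
Hypothesis nu_s_gt0 : 0 < cylm nu [:: s].
Local Notation a := (cylm nu [:: s]).

(* The bound [a / 2] is the hypothesis of dist_translate_lt and [e * a / 4]
   turns its conclusion [4 * eps / a] into [e]. *)
Definition translation_eps e := Num.min (a / 2) (e * a / 4).

Lemma translation_eps_gt0 e : 0 < e -> 0 < translation_eps e.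
Proof. by move=> e_gt0; rewrite lt_min !divr_gt0 ?mulr_gt0. Qed.

Lemma inB_rcons t d e : 0 < cylm P t ->
  inB (mu_cyl P t) d.+1 (translation_eps e) nu ->
  a / 2 * cylm P t < cylm P (rcons t s) /\
  inB (mu_cyl P (rcons t s)) d e nus.
Proof.
move=> Pt_gt0 t_in; have Pt_neq0 := lt0r_neq0 Pt_gt0.
have [eps_a eps_e] :
    translation_eps e <= a / 2 /\ translation_eps e <= e * a / 4.
  by split; rewrite ge_min lexx ?orbT.
have [mu_s_gt dist_lt] := dist_translate_lt (mu_cyl_consistent P t)
  (cylm_consistent nu) (@cylm_ge0 _ _ _ nu) nu_s_gt0 eps_a t_in.
split; first by rewrite cylm_rcons // mulrC ltr_pM2l.
rewrite /inB (eq_bigr (fun y : d.-tuple Sigma =>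
    `|translate s (mu_cyl P t) y - translate s (cylm nu) y|)).
  by apply: lt_le_trans dist_lt _; rewrite ler_pdivrMr //; lra.
by move=> y _; rewrite mu_cyl_rcons // nus_translate.
Qed.

Lemma p_ldeps_translate l d e :
  a / 2 * p_ldeps P l d.+1 (translation_eps e) nu <= p_ldeps P l.+1 d e nus.
Proof.
rewrite /p_ldeps [leRHS]big_mkcond big_tuple_rcons big_mkcond mulr_sumr /=.
set w := fun t : seq Sigma =>
  if (0 < cylm P t) && inB (mu_cyl P t) d e nus then cylm P t else 0.
have w_ge0 t : 0 <= w t by rewrite /w; case: ifP => // _; exact: cylm_ge0.
apply: ler_sum => t _; rewrite (bigD1 s) //= -[leLHS]addr0.
apply: lerD; last by apply: sumr_ge0 => s' _; exact: w_ge0.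
case: ifPn => [/andP[Pt_gt0 t_in]|_]; last by rewrite mulr0 w_ge0.
have [lt_ts ts_in] := inB_rcons Pt_gt0 t_in.
have ts_gt0 : 0 < cylm P (rcons t s).
  by apply: lt_trans lt_ts; rewrite !mulr_gt0.
by rewrite /w ts_gt0 ts_in ltW.
Qed.

Lemma p_deps_translate d e :
  a / 2 * p_deps P d.+1 (translation_eps e) nu <= p_deps P d e nus.
Proof.
apply: (ler_limn_inf_shift (k := 1%N)); try exact: bounded_p_ldeps.
  by rewrite divr_ge0 ?ltW.
by move=> l; rewrite addn1; exact: p_ldeps_translate.
Qed.

Lemma p_atom_translate : a / 2 * p_atom P nu <= p_atom P nus.
Proof.
rewrite !p_atomE; apply: limr_ge; first exact: cvgn_p_d.
apply: nearW => d; apply: p_d_ge => e e_gt0.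
apply: le_trans (p_deps_translate d e).
apply: ler_wpM2l; first by rewrite divr_ge0 ?ltW.
apply: le_trans (p_d_le _ _ _ (translation_eps_gt0 e_gt0)).
by apply: nonincreasing_cvgn_ge; [exact: nonincreasing_p_d|exact: cvgn_p_d].
Qed.

End translation.

Unset Implicit Arguments.
Set Strict Implicit.

Theorem mainTheorem4 (R : realType) (Sigma : finType) (s0 : Sigma)
  (P : probability (Omega s0) R) :
  stationary P -> ergodic P ->
  forall (nu : probability (Omega s0) R) (sigma : Sigma),
    in_Qbar_plus P nu -> 0 < cylm nu [:: sigma] ->
    exists nu_sigma : probability (Omega s0) R,
      (forall x : seq Sigma,
         cylm nu_sigma x = cylm nu (sigma :: x) / cylm nu [:: sigma]) /\
      in_Qbar_plus P nu_sigma.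
Proof.
move=> _ _ nu sigma [nu_acc nu_atom] nu_sigma_gt0.
have [nus nus_translate] := translate_exists nu_sigma_gt0.
have half_gt0 : 0 < cylm nu [:: sigma] / 2 by rewrite divr_gt0.
exists nus; split; first exact: nus_translate.
split.
  move=> d e _ e_gt0.
  apply: lt_le_trans (p_deps_translate P nus_translate nu_sigma_gt0 d e).
  by rewrite mulr_gt0 // nu_acc // translation_eps_gt0.
apply: lt_le_trans (p_atom_translate P nus_translate nu_sigma_gt0).
by rewrite mulr_gt0.
Qed.
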